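(* For every $\delta\in\mathbb N$, there exist $\varepsilon > 0$ and a blowup $H$ of a 7-cycle with minimum degree at least $\delta$ such that $\sum_{v\in V(H)}1/(d(v) + \varepsilon) > 3$.
   Context: A blowup of a graph $F$ is a graph obtained from $F$ by replacing some vertices with cliques and replacing each edge by the complete bipartite graph between the corresponding vertex sets (i.e., vertices $x$ of $F$ are replaced by pairwise disjoint nonempty cliques $Q_x$, and for each edge $xy$ of $F$ every vertex of $Q_x$ is adjacent to every vertex of $Q_y$, with no other edges). $d(v)$ is the degree of $v$ in $H$. *)

From mathcomp Require Import all_boot all_order all_algebra.
From mathcomp Require Import reals.
Set Implicit Arguments. Unset Strict Implicit. Unset Printing Implicit Defensive.

Definition C7adj (x y : 'I_7) : bool :=
  ((x.+1 %% 7) == y) || ((y.+1 %% 7) == x).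

(* (T, e) is a blowup of C7 with blowup map f: vertex x of C7 is replaced by
   the nonempty clique Q_x = f^-1(x) (f surjective); two distinct vertices
   u, v of H are adjacent iff they lie in the same clique or in cliques
   Q_x, Q_y with xy an edge of C7. *)
Definition is_blowup_C7 (T : finType) (e : rel T) (f : T -> 'I_7) : Prop :=
  (forall x : 'I_7, exists v : T, f v = x) /\
  (forall u v : T, e u v = (u != v) && ((f u == f v) || C7adj (f u) (f v))).

Definition deg (T : finType) (e : rel T) (v : T) : nat := #|[set u | e v u]|.

(** The blowup of C7 with cliques of size n on the vertices 0, 2, 4 and single
    vertices elsewhere has 3n + 2 vertices of degree n + 1 and two vertices of
    degree 2n, so that sum_v 1/d(v) = 3 - 1/(n+1) + 1/n > 3.  The strict
    inequality survives a perturbation eps <= 1/(4n) of the degrees. *)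
From mathcomp Require Import all_boot all_order all_algebra.
From mathcomp Require Import reals.
From mathcomp Require Import ring lra zify.
Import Order.TTheory GRing.Theory Num.Theory.

Set Implicit Arguments.
Unset Strict Implicit.
Unset Printing Implicit Defensive.

Section Blowup.
Variables (I : finType) (adj : rel I) (a : I -> nat).

Definition blowup : finType := {i : I & 'I_(a i)}.

Definition blowup_rel : rel blowup :=
  fun u v => (u != v) && ((tag u == tag v) || adj (tag u) (tag v)).

Definition closed_nbhd (x i : I) : bool := (x == i) || adj x i.

Lemma sum_blowup {R : Type} {idx : R} (op : Monoid.com_law idx) (F : I -> R) :
  \big[op/idx]_(v : blowup) F (tag v) = \big[op/idx]_(i : I) \big[op/idx]_(j < a i) F i.
Proof. exact: (esym (@sig_big_dep _ _ op I _ xpredT (fun _ _ => true) (fun i _ => F i))). Qed.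

Lemma card_blowup_preim (P : pred I) :
  #|[set u : blowup | P (tag u)]| = \sum_(i | P i) a i.
Proof.
rewrite -sum1_card big_mkcond /=.
under eq_bigr do rewrite inE.
rewrite (sum_blowup addn (fun i => if P i then 1 else 0)%N).
rewrite [RHS]big_mkcond; apply: eq_bigr => i _.
by rewrite sum_nat_const card_ord; case: (P i); rewrite ?muln1 ?muln0.
Qed.

Lemma deg_blowup (v : blowup) :
  deg blowup_rel v = (\sum_(i | closed_nbhd (tag v) i) a i).-1.
Proof.
rewrite /deg; have -> : [set u | blowup_rel v u] = [set u | closed_nbhd (tag v) (tag u)] :\ v.
  by apply/setP => u; rewrite !inE eq_sym.
by rewrite -card_blowup_preim (cardsD1 v [set u | _]) inE /closed_nbhd eqxx.
Qed.
End Blowup.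

Arguments blowup_rel {I} adj a.

Lemma is_blowup_C7_blowup (a : 'I_7 -> nat) :
  (forall x, 0 < a x)%N -> is_blowup_C7 (blowup_rel C7adj a) tag.
Proof. by move=> a_gt0; split=> // x; exists (Tagged (fun i => 'I_(a i)) (Ordinal (a_gt0 x))). Qed.

Definition c7_sizes (n : nat) (i : 'I_7) : nat := if val i \in [:: 0; 2; 4] then n else 1.

Definition c7_deg (n : nat) (i : 'I_7) : nat := if val i \in [:: 1; 3] then n.*2 else n.+1.

Lemma deg_c7_blowup (n : nat) (v : blowup (c7_sizes n)) :
  deg (blowup_rel C7adj (c7_sizes n)) v = c7_deg n (tag v).
Proof.
rewrite deg_blowup big_mkcond /= !big_ord_recl big_ord0.
case: v => [[[|[|[|[|[|[|[|k]]]]]]] lt_k7] _] //=;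
  by rewrite /closed_nbhd /C7adj /c7_sizes /c7_deg /=; lia.
Qed.

Local Open Scope ring_scope.

(* Clearing denominators leaves the margin 2 - (6n - 1) eps - 3 eps^2. *)
Lemma three_lt_weighted_inverses (R : realFieldType) (n eps : R) :
  1 <= n -> 0 < eps -> eps * n <= 1 / 4 ->
  3 < (3 * n + 2) / (n + 1 + eps) + 2 / (2 * n + eps).
Proof.
move=> n_ge1 eps_gt0 eps_small.
have p_gt0 : 0 < n + 1 + eps by lra.
have q_gt0 : 0 < 2 * n + eps by lra.
by rewrite addf_div ?gt_eqF // ltr_pdivlMr ?mulr_gt0 //; nra.
Qed.

Lemma sum_inv_deg_c7_blowup (R : realFieldType) (n : nat) (eps : R) : 0 < eps ->
  \sum_(v : blowup (c7_sizes n)) 1 / ((deg (blowup_rel C7adj (c7_sizes n)) v)%:R + eps)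
  = (3 * n%:R + 2) / (n%:R + 1 + eps) + 2 / (2 * n%:R + eps).
Proof.
move=> eps_gt0; under eq_bigr do rewrite deg_c7_blowup.
rewrite (sum_blowup _ +%R (fun i => 1 / ((c7_deg n i)%:R + eps))).
under eq_bigr do rewrite sumr_const card_ord.
rewrite !big_ord_recl big_ord0 /c7_sizes /c7_deg /= -muln2; field.
have n_ge0 : 0 <= n%:R :> R := ler0n _ n.
by rewrite !gt_eqF //; lra.
Qed.

Theorem proposition4p3 (R : realType) (delta : nat) :
  exists eps : R, 0 < eps /\
  exists (T : finType) (e : rel T) (f : T -> 'I_7),
    is_blowup_C7 e f /\
    (forall v : T, (delta <= deg e v)%N) /\
    3 < \sum_(v : T) 1 / ((deg e v)%:R + eps).
Proof.
pose n := delta.+1; pose eps : R := (4 * n%:R)^-1.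
have n_ge1 : 1 <= n%:R :> R by rewrite ler1n.
have eps_gt0 : 0 < eps by rewrite invr_gt0; lra.
have eps_n : eps * n%:R = 1 / 4 by rewrite /eps; field; rewrite pnatr_eq0.
exists eps; split => //.
exists (blowup (c7_sizes n)), (blowup_rel C7adj (c7_sizes n)), tag.
split; [|split].
- by apply: is_blowup_C7_blowup => x; rewrite /c7_sizes; case: ifP.
- by move=> v; rewrite deg_c7_blowup /c7_deg; case: ifP => _; lia.
rewrite sum_inv_deg_c7_blowup //.
by apply: three_lt_weighted_inverses n_ge1 eps_gt0 _; rewrite eps_n.
Qed.
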